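(* Let $E$ be an order continuous Banach lattice with a weak unit, represented over a probability space $(\Omega,\Sigma,\mu)$ as in the context, and let $j:E\to L_1(\mu)$ be the inclusion. Then $j$ is disjointly strictly singular if and only if for every disjoint sequence $(x_n)$ in $S_E$ one has $\|j x_n\|_1\to 0$ as $n\to\infty$.
   Context: A Banach lattice $E$ is order continuous if every net decreasing in order to $0$ converges in norm to $0$; $e\in E_+$ is a weak unit if $|x|\wedge e=0$ implies $x=0$. Representation: every order continuous Banach lattice $E$ with a weak unit can be represented over a probability space $(\Omega,\Sigma,\mu)$ so that $L_\infty(\mu)\subset E\subset L_1(\mu)$, $E$ dense in $L_1(\mu)$, $L_\infty(\mu)$ dense in $E$, $\|f\|_1\le\|f\|_E\le 2\|f\|_\infty$ for $f\in L_\infty(\mu)$, and the order of $E$ induced by $L_1(\mu)$; the inclusion $j$ is then bounded. An operator $T\in\mathrm{L}(E,Y)$ is disjointly strictly singular ($\mathrm{DSS}$) if there is no disjoint sequence $(x_n)$ of non-zero vectors in $E$ such that the restriction of $T$ to the closed span $[x_n]$ is an isomorphism. *)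

From HB Require Import structures.
From mathcomp Require Import all_boot all_order all_algebra.
From mathcomp Require Import all_classical all_reals all_analysis.
Set Implicit Arguments. Unset Strict Implicit. Unset Printing Implicit Defensive.
Import Order.TTheory GRing.Theory Num.Theory.
Import numFieldNormedType.Exports.
Local Open Scope classical_set_scope.
Local Open Scope ring_scope.

Section Defs.
Context {d : measure_display} {T : measurableType d} {R : realType}.
Variable mu : probability T R.

Definition ae0 (f : T -> R) : Prop := {ae mu, forall t, f t = 0}.
(* f <= g mu-a.e. (the order of L_1(mu), inherited by E) *)
Definition ae_le (f g : T -> R) : Prop := {ae mu, forall t, f t <= g t}.

Definition L1norm (f : T -> R) : \bar R := 'N[mu]_1[EFin \o f]%E.
Definition Linfnorm (f : T -> R) : \bar R := 'N[mu]_+oo[EFin \o f]%E.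

Definition Linfty (f : T -> R) : Prop :=
  measurable_fun setT f /\ (Linfnorm f < +oo)%E.

(* (E, nE) is an order continuous Banach lattice with a weak unit,
   represented over (T, mu) as in the context:
   L_infty(mu) ⊆ E ⊆ L_1(mu), elements are real functions taken up to
   mu-a.e. equality, the lattice order is the a.e. order of L_1(mu). *)
Record repr_OCBL (E : set (T -> R)) (nE : (T -> R) -> R) : Prop := {
  E_int : forall f, E f -> mu.-integrable setT (EFin \o f);
  E_0 : E (cst 0);
  E_add : forall f g, E f -> E g -> E (fun t => f t + g t);
  E_scale : forall (a : R) f, E f -> E (fun t => a * f t);
  nE_triangle : forall f g, E f -> E g ->
     nE (fun t => f t + g t) <= nE f + nE g;
  nE_scale : forall (a : R) f, E f -> nE (fun t => a * f t) = `|a| * nE f;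
  nE_eq0 : forall f, E f -> (nE f = 0 <-> ae0 f);
  (* E is a vector sublattice of L_1(mu) (order induced by L_1(mu)) *)
  E_abs : forall f, E f -> E (fun t => `|f t|);
  nE_lattice : forall f g, E f -> E g ->
     ae_le (fun t => `|f t|) (fun t => `|g t|) -> nE f <= nE g;
  E_complete : forall u : nat -> T -> R, (forall n, E (u n)) ->
     (forall e : R, 0 < e -> exists N, forall m n, (N <= m)%N -> (N <= n)%N ->
        nE (fun t => u m t - u n t) < e) ->
     exists f, E f /\ (forall e : R, 0 < e -> exists N, forall n, (N <= n)%N ->
        nE (fun t => u n t - f t) < e);
  (* order continuity: every net decreasing in order to 0 is norm null *)
  E_order_continuous :
     forall (I : Type) (le : I -> I -> Prop) (x : I -> T -> R),
     inhabited I ->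
     (forall i, le i i) -> (forall i j k, le i j -> le j k -> le i k) ->
     (forall i j, exists k, le i k /\ le j k) ->
     (forall i, E (x i)) ->
     (forall i j, le i j -> ae_le (x j) (x i)) ->
     (forall i, ae_le (cst 0) (x i)) ->
     (forall y, E y -> (forall i, ae_le y (x i)) -> ae_le y (cst 0)) ->
     forall e : R, 0 < e -> exists i0, forall i, le i0 i -> nE (x i) < e;
  E_weak_unit : exists w, E w /\ ae_le (cst 0) w /\
     forall x, E x -> ae0 (fun t => Num.min `|x t| (w t)) -> ae0 x;
  Linfty_sub : forall f, Linfty f -> E f;
  norm_bounds : forall f, Linfty f ->
     (L1norm f <= (nE f)%:E <= 2%:E * Linfnorm f)%E;
  Linfty_dense : forall f, E f -> forall e : R, 0 < e ->
     exists g, Linfty g /\ nE (fun t => f t - g t) < e;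
  E_dense_L1 : forall f, mu.-integrable setT (EFin \o f) ->
     forall e : R, 0 < e ->
     exists g, E g /\ (L1norm (fun t => (f t - g t)%R) < e%:E)%E;
  j_bounded : exists C : R, forall f, E f -> (L1norm f <= (C * nE f)%:E)%E
}.

Definition span (x : nat -> T -> R) : set (T -> R) :=
  [set y | exists (n : nat) (a : nat -> R),
     y = fun t => \sum_(i < n) a i * x i t].

Definition closed_span (E : set (T -> R)) (nE : (T -> R) -> R)
    (x : nat -> T -> R) : set (T -> R) :=
  [set y | E y /\ forall e : R, 0 < e ->
     exists z, span x z /\ nE (fun t => y t - z t) < e].

Definition disjoint_seq (x : nat -> T -> R) : Prop :=
  forall n m, n <> m -> ae0 (fun t => Num.min `|x n t| `|x m t|).

Definition j_DSS (E : set (T -> R)) (nE : (T -> R) -> R) : Prop :=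
  ~ exists x : nat -> T -> R,
      (forall n, E (x n)) /\ (forall n, ~ ae0 (x n)) /\ disjoint_seq x /\
      exists c C : R, 0 < c /\ 0 < C /\
        forall y, closed_span E nE x y ->
          ((c * nE y)%:E <= L1norm y <= (C * nE y)%:E)%E.

End Defs.

From Pilot Require Import Defs.
From HB Require Import structures.
From mathcomp Require Import all_boot all_order all_algebra.
From mathcomp Require Import all_classical all_reals all_analysis.
From mathcomp Require Import lra ring measurable_realfun.
Import Order.TTheory GRing.Theory Num.Theory.
Import numFieldNormedType.Exports.
Local Open Scope classical_set_scope.
Local Open Scope ring_scope.
Set Implicit Arguments. Unset Strict Implicit.

(* Write |f|_1 for the (finite) L_1 norm of f in E.  The whole proof rests on
   one estimate: if (x_n) is disjoint, normalized in E and |x_n|_1 >= e, then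
     e ||z||_E <= |z|_1   for every z in the closed span [x_n].
   On the span this follows from |sum a_i x_i|_1 = sum |a_i| |x_i|_1 (the x_i
   have disjoint supports) and ||sum a_i x_i||_E <= sum |a_i|; it passes to
   the closure because j is bounded.
   - If j is DSS and |x_n|_1 does not tend to 0, some subsequence satisfies
     |x_n|_1 >= e > 0; the estimate and the boundedness of j then make j an
     isomorphism on its closed span, a contradiction.
   - If j is an isomorphism c ||.||_E <= |.|_1 on [x_n] for a disjoint
     sequence of non-zero x_n, the normalized vectors x_n / ||x_n||_E lie in
     [x_n] and satisfy |.|_1 >= c, so they do not tend to 0 in L_1. *)

Lemma not_near_subseq (P : nat -> Prop) : ~ (\forall n \near \oo, P n) ->
  exists phi : nat -> nat, injective phi /\ forall k, ~ P (phi k).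
Proof.
move=> notP.
have /choice[g Hg] : forall N, exists n, (N <= n)%N /\ ~ P n.
  move=> N; apply: contrapT => noN; apply: notP; exists N => // n /= Nn.
  by apply: contrapT => Pn; apply: noN; exists n.
pose phi k := iter k (fun n => g n.+1) (g 0%N).
have phiS k : (phi k < phi k.+1)%N by have [] := Hg (phi k).+1.
exists phi; split; first exact/incn_inj/leq_mono/(homo_ltn ltn_trans phiS).
by case=> [|k]; [have [] := Hg 0%N | have [] := Hg (phi k).+1].
Qed.

Section NormedFunctionSpace.
Context (d : measure_display) (T : measurableType d) (R : realType).
Variables (mu : probability T R) (E : set (T -> R)) (nE : (T -> R) -> R).
Hypothesis HE : repr_OCBL mu E nE.

Lemma nE0 : nE (cst 0) = 0.
Proof. by apply/(nE_eq0 HE (E_0 HE)); apply: aeW. Qed.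

Lemma E_sub f g : E f -> E g -> E (fun t => f t - g t).
Proof.
move=> Ef Eg; have := E_add HE Ef (E_scale HE (-1) Eg).
by congr E; apply/funext => t; rewrite mulN1r.
Qed.

Lemma nE_ge0 f : E f -> 0 <= nE f.
Proof.
move=> Ef; have := nE_triangle HE Ef (E_scale HE (-1) Ef).
have -> : (fun t => f t + -1 * f t) = cst 0.
  by apply/funext => t; rewrite mulN1r subrr.
by rewrite nE0 (nE_scale HE _ Ef) normrN normr1 mul1r; lra.
Qed.

Lemma nE_subC f g : E f -> E g ->
  nE (fun t => f t - g t) = nE (fun t => g t - f t).
Proof.
move=> Ef Eg; have := nE_scale HE (-1) (E_sub Eg Ef).
rewrite normrN normr1 mul1r => <-; congr nE; apply/funext => t.
by rewrite mulN1r opprB.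
Qed.

Lemma nE_le_approx y z : E y -> E z ->
  nE y <= nE z + nE (fun t => y t - z t).
Proof.
move=> Ey Ez; have := nE_triangle HE Ez (E_sub Ey Ez).
by have -> : (fun t => z t + (y t - z t)) = y
  by apply/funext => t; rewrite addrC subrK.
Qed.

Lemma normalized_nonzero f : E f -> nE f = 1 -> ~ ae0 mu f.
Proof.
by move=> Ef nf1 /(nE_eq0 HE Ef).2; rewrite nf1 => /eqP; rewrite oner_eq0.
Qed.

Lemma normalize f : E f -> ~ ae0 mu f ->
  E (fun t => (nE f)^-1 * f t) /\ nE (fun t => (nE f)^-1 * f t) = 1.
Proof.
move=> Ef nz; have nf0 : 0 < nE f.
  rewrite lt_def (nE_ge0 Ef) andbT; apply/eqP => /(nE_eq0 HE Ef).1.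
  exact: nz.
split; first exact: (E_scale HE _ Ef).
by rewrite (nE_scale HE _ Ef) ger0_norm ?invr_ge0 ?ltW // mulVf ?lt0r_neq0.
Qed.

Lemma E_sum (w : nat -> T -> R) (a : nat -> R) n : (forall i, E (w i)) ->
  E (fun t => \sum_(i < n) a i * w i t).
Proof.
move=> Ew; elim: n => [|n IH].
  have -> : (fun t => \sum_(i < 0) a i * w i t) = cst 0
    by apply/funext => t; rewrite big_ord0.
  exact: (E_0 HE).
have -> : (fun t => \sum_(i < n.+1) a i * w i t) =
    (fun t => \sum_(i < n) a i * w i t + a n * w n t)
  by apply/funext => t; rewrite big_ord_recr.
exact: (E_add HE IH (E_scale HE (a n) (Ew n))).
Qed.

Lemma nE_sum (w : nat -> T -> R) (a : nat -> R) n : (forall i, E (w i)) ->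
  nE (fun t => \sum_(i < n) a i * w i t) <= \sum_(i < n) `|a i| * nE (w i).
Proof.
move=> Ew; elim: n => [|n IH].
  have -> : (fun t => \sum_(i < 0) a i * w i t) = cst 0
    by apply/funext => t; rewrite big_ord0.
  by rewrite nE0 big_ord0.
have -> : (fun t => \sum_(i < n.+1) a i * w i t) =
    (fun t => \sum_(i < n) a i * w i t + a n * w n t)
  by apply/funext => t; rewrite big_ord_recr.
rewrite big_ord_recr /=.
apply: le_trans (nE_triangle HE (E_sum a n Ew) (E_scale HE (a n) (Ew n))) _.
by rewrite (nE_scale HE _ (Ew n)) lerD2r.
Qed.

Lemma closed_span_scale (x : nat -> T -> R) (a : R) N :
  (forall n, E (x n)) -> closed_span E nE x (fun t => a * x N t).
Proof.
move=> Ex; split; first exact: (E_scale HE _ (Ex N)).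
move=> eps eps0; pose b i := if i == N then a else 0.
exists (fun t => \sum_(i < N.+1) b i * x i t); split; first by exists N.+1, b.
have -> : (fun t => a * x N t - \sum_(i < N.+1) b i * x i t) = cst 0.
  apply/funext => t; rewrite big_ord_recr /= /b eqxx big1 ?add0r ?subrr //.
  by move=> i _; rewrite ifN ?mul0r // ltn_eqF.
by rewrite nE0.
Qed.

End NormedFunctionSpace.

Section L1NormOnE.
Context (d : measure_display) (T : measurableType d) (R : realType).
Variables (mu : probability T R) (E : set (T -> R)) (nE : (T -> R) -> R).
Hypothesis HE : repr_OCBL mu E nE.

(* |f|_1 as a real number; it is the L_1 norm for f in E (see L1_fin). *)
Definition jnorm (f : T -> R) : R := fine (L1norm mu f).

Lemma jnorm_ge0 f : 0 <= jnorm f.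
Proof. exact/fine_ge0/Lnorm_ge0. Qed.

Lemma L1E f : L1norm mu f = (\int[mu]_t (`|f t|)%:E)%E.
Proof. by rewrite /L1norm Lnorm1. Qed.

Lemma E_meas f : E f -> measurable_fun setT f.
Proof. by move=> /(E_int HE) /integrableP [/measurable_EFinP]. Qed.

Lemma E_abs_meas f : E f -> measurable_fun setT (fun t => (`|f t|)%:E).
Proof. by move=> Ef; apply/measurable_EFinP/measurableT_comp/E_meas. Qed.

Lemma L1_fin f : E f -> L1norm mu f = (jnorm f)%:E.
Proof.
move=> Ef; rewrite fineK // ge0_fin_numE ?Lnorm_ge0 // L1E.
by have /integrableP[_] := E_int HE Ef.
Qed.

Lemma jnorm_le_approx y z : E y -> E z ->
  jnorm z <= jnorm y + jnorm (fun t => z t - y t).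
Proof.
move=> Ey Ez; have Ezy := E_sub HE Ez Ey.
rewrite -lee_fin EFinD -!L1_fin // !L1E -ge0_integralD //;
  try exact: E_abs_meas.
apply: ge0_le_integral => //; first exact: E_abs_meas.
  by apply: emeasurable_funD; exact: E_abs_meas.
move=> t _; rewrite -EFinD lee_fin.
by have := ler_normD (y t) (z t - y t); rewrite addrC subrK.
Qed.

Lemma jnorm_bounded : exists C : R, 0 < C /\ forall f, E f -> jnorm f <= C * nE f.
Proof.
have [C HC] := j_bounded HE.
exists (Num.max C 1); split; first by rewrite lt_max ltr01 orbT.
move=> f Ef; have := HC f Ef; rewrite L1_fin // lee_fin => /le_trans; apply.
by apply: ler_wpM2r; [exact: (nE_ge0 HE Ef) | rewrite le_max lexx].
Qed.

Lemma L1_cvg0P (x : nat -> T -> R) : (forall n, E (x n)) ->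
  (L1norm mu \o x) @ \oo --> 0%E <->
  forall e, 0 < e -> \forall n \near \oo, jnorm (x n) < e.
Proof.
move=> Ex; have dist0 n : `|0 - jnorm (x n)| = jnorm (x n).
  by rewrite sub0r normrN ger0_norm ?jnorm_ge0.
split.
- move=> /fine_cvgP[_ /cvgrPdist_lt cvgx] e e0.
  by apply: filterS (cvgx e e0) => n; rewrite dist0.
- move=> small; apply/fine_cvgP; split.
    by apply: nearW => n; rewrite /= L1_fin.
  apply/cvgrPdist_lt => e e0; apply: filterS (small e e0) => n.
  by rewrite /= dist0.
Qed.

End L1NormOnE.

Section DisjointCombinations.
Context (d : measure_display) (T : measurableType d) (R : realType).
Variables (mu : probability T R) (E : set (T -> R)) (nE : (T -> R) -> R).
Hypothesis HE : repr_OCBL mu E nE.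

Lemma disjoint_seq_ae (x : nat -> T -> R) : disjoint_seq mu x ->
  {ae mu, forall t, forall i j : nat, i <> j -> Num.min `|x i t| `|x j t| = 0}.
Proof.
move=> dx; apply: ae_foralln => i; apply: ae_foralln => j.
have [->|ij] := eqVneq i j; first by apply: aeW.
by apply: filterS (dx i j (elimN eqP ij)) => t ht _.
Qed.

Lemma disjoint_seq_scale (x : nat -> T -> R) (a : nat -> R) :
  disjoint_seq mu x -> disjoint_seq mu (fun n t => a n * x n t).
Proof.
move=> dx n m nm; apply: filterS (dx n m nm) => t.
rewrite !normrM => /eqP; rewrite eq_le ge_min !normr_le0 andbC.
move=> /andP[_ /orP[]] /eqP ->; rewrite normr0 mulr0.
  by rewrite min_l // mulr_ge0.
by rewrite min_r // mulr_ge0.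
Qed.

Lemma abs_sum_disjoint (x : nat -> T -> R) (a : nat -> R) t n :
  (forall i j : nat, i <> j -> Num.min `|x i t| `|x j t| = 0) ->
  `|\sum_(i < n) a i * x i t| = \sum_(i < n) `|a i| * `|x i t|.
Proof.
move=> disj_t; elim: n => [|n IH]; first by rewrite !big_ord0 normr0.
rewrite !big_ord_recr /=.
have [->|xn0] := eqVneq (x n t) 0; first by rewrite !normr0 !mulr0 !addr0.
have others0 (i : 'I_n) : x i t = 0.
  have /eqP := disj_t i n (elimN eqP (negbT (ltn_eqF (ltn_ord i)))).
  rewrite eq_le ge_min !normr_le0 => /andP[/orP[/eqP //|/eqP xn] _].
  by rewrite xn eqxx in xn0.
by rewrite !big1 ?add0r ?normrM // => i _; rewrite others0 ?normr0 mulr0.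
Qed.

Lemma jnorm_sum_disjoint (x : nat -> T -> R) (a : nat -> R) n :
  (forall i, E (x i)) -> disjoint_seq mu x ->
  jnorm mu (fun t => \sum_(i < n) a i * x i t) =
  \sum_(i < n) `|a i| * jnorm mu (x i).
Proof.
move=> Ex dx; apply/EFin_inj; rewrite -(L1_fin HE (E_sum HE a n Ex)).
have mx i : measurable_fun setT (x i) by exact: (E_meas HE (Ex i)).
rewrite L1E (ae_eq_integral (fun t => (\sum_(i < n) `|a i| * `|x i t|)%:E)) //.
- under eq_integral do rewrite -sumEFin.
  rewrite (@ge0_integral_sum _ _ _ mu setT measurableT _
    (fun (i : 'I_n) t => (`|a i| * `|x i t|)%:E)); last 2 first.
  + move=> i; apply/measurable_EFinP/measurable_funM => //.
    exact: measurableT_comp.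
  + by move=> i t _; rewrite lee_fin mulr_ge0.
  rewrite -sumEFin; apply: eq_bigr => i _.
  under eq_integral do rewrite EFinM.
  rewrite ge0_integralZl //; last exact: (E_abs_meas HE (Ex i)).
  by rewrite -L1E (L1_fin HE (Ex i)).
- apply/measurable_EFinP/measurableT_comp => //.
  by apply: measurable_sum => i; exact: measurable_funM.
- apply/measurable_EFinP/measurable_sum => i.
  by apply: measurable_funM => //; exact: measurableT_comp.
- by apply: filterS (disjoint_seq_ae dx) => t ht _; rewrite abs_sum_disjoint.
Qed.

End DisjointCombinations.

Section LowerEstimate.
Context (d : measure_display) (T : measurableType d) (R : realType).
Variables (mu : probability T R) (E : set (T -> R)) (nE : (T -> R) -> R).
Hypothesis HE : repr_OCBL mu E nE.

Variable x : nat -> T -> R.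
Hypothesis x_unit : forall n, E (x n) /\ nE (x n) = 1.
Hypothesis x_disj : disjoint_seq mu x.

(* If |x_n|_1 >= e for all n then, on the span,
   e ||w||_E <= e sum |a_i| <= sum |a_i| |x_i|_1 = |w|_1. *)
Lemma span_lower_bound e : 0 <= e -> (forall n, e <= jnorm mu (x n)) ->
  forall w, Defs.span x w -> e * nE w <= jnorm mu w.
Proof.
move=> e_ge0 x_big _ [n [a ->]]; have Ex i : E (x i) := (x_unit i).1.
rewrite (jnorm_sum_disjoint HE a n Ex x_disj).
apply: le_trans (_ : e * \sum_(i < n) `|a i| <= _).
  apply: ler_wpM2l => //; apply: le_trans (nE_sum HE a n Ex) _.
  by apply: ler_sum => i _; rewrite (x_unit i).2 mulr1.
by rewrite mulr_sumr; apply: ler_sum => i _; rewrite mulrC ler_wpM2l.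
Qed.

(* The estimate passes to the closed span since j is bounded by C:
   e ||z||_E <= e ||w||_E + e d <= |w|_1 + e d <= |z|_1 + (C + e) d
   for w in the span with ||z - w||_E < d. *)
Lemma closed_span_lower_bound e C : 0 <= e -> (forall n, e <= jnorm mu (x n)) ->
  0 < C -> (forall f, E f -> jnorm mu f <= C * nE f) ->
  forall z, closed_span E nE x z -> e * nE z <= jnorm mu z.
Proof.
move=> e_ge0 x_big C0 jC z [Ez approx]; apply/ler_addgt0Pr => eps eps0.
have eC0 : 0 < e + C by lra.
have [w [spw zw]] := approx _ (divr_gt0 eps0 eC0).
have Ew : E w by case: spw => n [a ->]; exact: (E_sum HE a n (fun i => (x_unit i).1)).
have nzw := nE_ge0 HE (E_sub HE Ez Ew).
have le_z := nE_le_approx HE Ez Ew.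
have le_w := jnorm_le_approx HE Ez Ew.
have jwz := jC _ (E_sub HE Ew Ez); rewrite (nE_subC HE Ew Ez) in jwz.
have lbw := span_lower_bound e_ge0 x_big spw.
have : e * nE z <= e * nE w + e * (eps / (e + C)).
  by rewrite -mulrDr ler_wpM2l //; lra.
have : C * nE (fun t => z t - w t) <= C * (eps / (e + C)).
  by rewrite ler_wpM2l //; lra.
have : e * (eps / (e + C)) + C * (eps / (e + C)) = eps by field; lra.
lra.
Qed.

End LowerEstimate.

Theorem proposition4p1 (d : measure_display) (T : measurableType d)
  (R : realType) (mu : probability T R)
  (E : set (T -> R)) (nE : (T -> R) -> R) :
  repr_OCBL mu E nE ->
  (j_DSS mu E nE <->
   forall x : nat -> T -> R,
     (forall n, E (x n) /\ nE (x n) = 1) -> disjoint_seq mu x ->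
     (L1norm mu \o x) @ \oo --> 0%E).
Proof.
move=> HE; have [C [C0 jC]] := jnorm_bounded HE; split.
- move=> dss x x_unit dx; apply/(L1_cvg0P HE (fun n => (x_unit n).1)) => e e0.
  apply: contrapT => /not_near_subseq[phi [phi_inj x_big]].
  have y_unit k : E (x (phi k)) /\ nE (x (phi k)) = 1 := x_unit (phi k).
  have y_disj : disjoint_seq mu (x \o phi).
    by move=> i j ij; apply: dx => /phi_inj.
  apply: dss; exists (x \o phi); split; first by move=> k; case: (y_unit k).
  split; first by move=> k; case: (y_unit k) => Ey /(normalized_nonzero HE Ey).
  split => //; exists e, C; do 2 split => //; move=> z zspan.
  rewrite (L1_fin HE zspan.1) !lee_fin (jC _ zspan.1) andbT.
  apply: (closed_span_lower_bound HE y_unit y_disj (ltW e0) _ C0 jC zspan).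
  by move=> k; rewrite leNgt; apply/negP; exact: x_big.
- move=> conv [x [Ex [x_nz [dx [c [? [c0 [_ iso]]]]]]]].
  pose y n t := (nE (x n))^-1 * x n t.
  have y_unit n : E (y n) /\ nE (y n) = 1 := normalize HE (Ex n) (x_nz n).
  have := conv y y_unit (disjoint_seq_scale _ dx).
  move=> /(L1_cvg0P HE (fun n => (y_unit n).1)) /(_ c c0)[N _ /(_ N (leqnn N))].
  have := iso (y N) (closed_span_scale HE _ N Ex).
  rewrite (y_unit N).2 mulr1 (L1_fin HE (y_unit N).1) lee_fin => /andP[cy _].
  by rewrite ltNge cy.
Qed.
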